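(* For any sum-indecomposable permutation $\sigma$, the class $\mathrm{St}(\mathrm{Inc},\mathrm{Av}(\sigma))$ is a subclass of $\mathrm{Av}(1\ominus\sigma)$.
   Context: $\mathrm{Av}(\sigma)$ is the class of permutations not containing $\sigma$; $\mathrm{Inc}=\mathrm{Av}(21)$ is the class of increasing permutations. $\pi\oplus\sigma$ is the permutation whose diagram is a copy of $\pi$ with a copy of $\sigma$ placed above and to the right; $\pi\ominus\sigma$ has a copy of $\sigma$ placed below and to the right of a copy of $\pi$. $\sigma$ is sum-indecomposable if it is not a direct sum of two shorter permutations. Grid classes: for a $k\times\ell$ matrix $\mathcal{M}$ of permutation classes ($k$ columns, $\ell$ rows, $\mathcal{M}_{i,j}$ in column $i$, row $j$, rows numbered bottom to top), a permutation $\pi$ of length $n$ is in $\mathrm{Grid}(\mathcal{M})$ if there are $1=c_1\le\dots\le c_{k+1}=n+1$, $1=r_1\le\dots\le r_{\ell+1}=n+1$ such that for each $i,j$ the points $(x,\pi_x)$ with $c_i\le x<c_{i+1}$, $r_j\le\pi_x<r_{j+1}$ form a pattern in $\mathcal{M}_{i,j}$. For classes $\mathcal{C},\mathcal{D}$, $\mathrm{St}_k(\mathcal{C},\mathcal{D})=\mathrm{Grid}(\mathcal{M})$ where $\mathcal{M}$ is the matrix with $k$ columns and $k+1$ rows whose only nonempty entries are $\mathcal{M}_{i,i+1}=\mathcal{C}$ and $\mathcal{M}_{i,i}=\mathcal{D}$ for $i\in[k]$ (so in each column the $\mathcal{C}$-cell lies directly above the $\mathcal{D}$-cell), and $\mathrm{St}(\mathcal{C},\mathcal{D})=\bigcup_{k\ge1}\mathrm{St}_k(\mathcal{C},\mathcal{D})$.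 *)

From mathcomp Require Import all_boot.
Set Implicit Arguments. Unset Strict Implicit. Unset Printing Implicit Defensive.

(* Permutations of length n are sequences that are rearrangements of
   0, 1, ..., n-1 (0-based values; the diagram point of position x is
   (x, nth 0 p x)). *)
Definition is_perm (p : seq nat) : Prop := perm_eq p (iota 0 (size p)).

Definition std (s : seq nat) : seq nat :=
  [seq count (fun y => y < x) s | x <- s].

Definition order_iso (s t : seq nat) : Prop :=
  size s = size t /\
  forall i j, i < size s -> j < size s ->
    (nth 0 s i < nth 0 s j) = (nth 0 t i < nth 0 t j).

Definition contains (pi sigma : seq nat) : Prop :=
  exists m : bitseq, size m = size pi /\ order_iso (mask m pi) sigma.

Definition perm_class := seq nat -> Prop.

Definition Av (sigma : seq nat) : perm_class := fun pi => ~ contains pi sigma.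

Definition Inc : perm_class := Av [:: 1; 0].

Definition dsum (a b : seq nat) : seq nat := a ++ [seq size a + x | x <- b].
Definition skew_sum (a b : seq nat) : seq nat := [seq size b + x | x <- a] ++ b.

Definition sum_indecomposable (sigma : seq nat) : Prop :=
  forall a b, is_perm a -> is_perm b -> sigma = dsum a b -> a = [::] \/ b = [::].

Definition cell (pi : seq nat) (c0 c1 r0 r1 : nat) : seq nat :=
  [seq nth 0 pi x | x <- iota 0 (size pi) &
     (c0 <= x < c1) && (r0 <= nth 0 pi x < r1)].

(* Grid class of a k-column, l-row matrix M of classes (M i j : column i,
   row j, 0-based, rows numbered bottom to top). Dividers c_0..c_k and
   r_0..r_l (0-based version of 1 = c_1 <= ... <= c_{k+1} = n+1). *)
Definition Grid (k l : nat) (M : nat -> nat -> perm_class) : perm_class :=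
  fun pi =>
    exists (c r : nat -> nat),
      [/\ c 0 = 0, c k = size pi & (forall i, i < k -> c i <= c i.+1)] /\
      [/\ r 0 = 0, r l = size pi & (forall j, j < l -> r j <= r j.+1)] /\
      (forall i j, i < k -> j < l ->
            M i j (std (cell pi (c i) (c i.+1) (r j) (r j.+1)))).

Definition Empty_cell : perm_class := fun p => p = [::].

Definition St_k (k : nat) (C D : perm_class) : perm_class :=
  Grid k k.+1 (fun i j => if j == i then D else if j == i.+1 then C
                          else Empty_cell).

Definition St (C D : perm_class) : perm_class :=
  fun pi => exists k, 1 <= k /\ St_k k C D pi.

From mathcomp Require Import all_boot.
From mathcomp Require Import zify.
Set Implicit Arguments. Unset Strict Implicit. Unset Printing Implicit Defensive.

(* An occurrence of 1 ⊖ σ in π consists of a point p and a copy J of σ lying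
   below and to the right of p. If p lies in column i of the staircase, every
   point below-right of p lies in the Av(σ) cell of column i or of column i+1:
   the only other candidate, the increasing cell above the former, would contain
   a 21 together with p. Points of the first cell lie below and to the left of
   those of the second, so J splits σ as a direct sum; since σ is
   sum-indecomposable, J lies in a single Av(σ) cell, which is absurd. *)

Lemma is_perm_nth_lt s i : is_perm s -> i < size s -> nth 0 s i < size s.
Proof. by move=> hs hi; have := mem_nth 0 hi; rewrite (perm_mem hs) mem_iota. Qed.

Lemma order_iso_sym s t : order_iso s t -> order_iso t s.
Proof. by case=> hs h; split=> // i j hi hj; rewrite h // hs. Qed.

Lemma order_iso_trans s t u : order_iso s t -> order_iso t u -> order_iso s u.
Proof.
case=> h1 h2 [h3 h4]; split; first by rewrite h1.
by move=> i j hi hj; rewrite h2 // h4 // -h1.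
Qed.

Lemma order_iso_cons a b s t : order_iso (a :: s) (b :: t) -> order_iso s t.
Proof. by case=> /= [[hs] h]; split=> // i j; apply: (h i.+1 j.+1). Qed.

Lemma order_iso_map_nth s t K : order_iso s t -> all (gtn (size s)) K ->
  order_iso (map (nth 0 s) K) (map (nth 0 t) K).
Proof.
case=> hs h /allP hK; split; first by rewrite !size_map.
move=> i j; rewrite size_map => hi hj.
by rewrite !(nth_map 0) //; apply: h; apply: hK; exact: mem_nth.
Qed.

Lemma mask_nth_iota m (s : seq nat) :
  mask m s = map (nth 0 s) (mask m (iota 0 (size s))).
Proof. by rewrite map_mask -/(mkseq _ _) mkseq_nth. Qed.

Lemma order_iso_mask s t m : order_iso s t -> order_iso (mask m s) (mask m t).
Proof.
move=> h; rewrite (mask_nth_iota m s) (mask_nth_iota m t) -(proj1 h).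
by apply: order_iso_map_nth => //; apply/allP => x /mem_mask; rewrite mem_iota.
Qed.

Lemma count_lt_mono (s : seq nat) x y : x \in s -> x < y ->
  count (gtn x) s < count (gtn y) s.
Proof.
elim: s => //= z s IH; rewrite in_cons => /orP [/eqP -> | hx] hxy.
  rewrite ltnn hxy add0n add1n ltnS; apply: sub_count => w /= hw.
  exact: ltn_trans hw hxy.
rewrite -addnS; apply: leq_add; last exact: IH.
by case: (ltnP z x) => hzx; [rewrite (ltn_trans hzx hxy) | case: (z < y)].
Qed.

Lemma order_iso_std s : order_iso s (std s).
Proof.
split; first by rewrite size_map.
move=> i j hi hj; rewrite /std !(nth_map 0) //.
case: (ltnP (nth 0 s i) (nth 0 s j)) => h.
  by rewrite count_lt_mono // mem_nth.
apply/esym/negbTE; rewrite -leqNgt; apply: sub_count => z /= hz.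
exact: leq_trans hz h.
Qed.

Lemma contains_std s tau : contains s tau -> contains (std s) tau.
Proof.
case=> m [hm hiso]; exists m; split; first by rewrite size_map.
exact: order_iso_trans (order_iso_sym (order_iso_mask m (order_iso_std s))) hiso.
Qed.

Lemma contains_indices s tau : contains s tau ->
  exists2 K, subseq K (iota 0 (size s)) & order_iso (map (nth 0 s) K) tau.
Proof.
by case=> m [_ hiso]; exists (mask m (iota 0 (size s)));
  rewrite ?mask_subseq // -mask_nth_iota.
Qed.

Lemma contains_map_nth s (I K : seq nat) tau : subseq K I ->
  order_iso (map (nth 0 s) K) tau -> contains (map (nth 0 s) I) tau.
Proof.
case/subseqP=> m hm -> hiso; exists m; split; first by rewrite size_map.
by rewrite -map_mask.
Qed.

Lemma contains_std_cell pi c0 c1 r0 r1 K tau :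
  subseq K (iota 0 (size pi)) ->
  all (fun x => (c0 <= x < c1) && (r0 <= nth 0 pi x < r1)) K ->
  order_iso (map (nth 0 pi) K) tau ->
  contains (std (cell pi c0 c1 r0 r1)) tau.
Proof.
move=> hK hcell hiso; apply/contains_std/(contains_map_nth _ hiso).
by rewrite subseq_filter hcell.
Qed.

Lemma order_iso_allrel_cat s1 s2 t : order_iso (s1 ++ s2) t -> allrel ltn s1 s2 ->
  allrel ltn (take (size s1) t) (drop (size s1) t).
Proof.
case=> hsz hiso /allrelP hlt; apply/allrelP => x y.
have hs1 : size s1 <= size t by rewrite -hsz size_cat leq_addr.
move=> /(nthP 0) [l hl <-] /(nthP 0) [l' hl' <-].
rewrite size_takel // in hl; rewrite size_drop -hsz size_cat addKn in hl'.
rewrite /= nth_take // nth_drop -hiso ?size_cat ?ltn_add2l; try lia.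
rewrite !nth_cat hl (ltnNge (size s1 + l')) leq_addr /= addKn.
by apply: hlt; apply: mem_nth.
Qed.

Lemma perm_iota_cat (t u : seq nat) :
  perm_eq (t ++ u) (iota 0 (size t + size u)) -> allrel ltn t u ->
  perm_eq t (iota 0 (size t)) /\ perm_eq u (iota (size t) (size u)).
Proof.
move=> htu /allrelP hlt.
have huniq : uniq (t ++ u) by rewrite (perm_uniq htu) iota_uniq.
have sorted_sort v : uniq v -> sorted ltn (sort leq v).
  by move=> hv; rewrite ltn_sorted_uniq_leq sort_uniq hv sort_sorted //; apply: leq_total.
have hsorted : sorted ltn (sort leq t ++ sort leq u).
  move: huniq; rewrite cat_uniq => /and3P [ht _ hu].
  rewrite (sorted_pairwise ltn_trans) pairwise_cat -!(sorted_pairwise ltn_trans).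
  apply/and3P; split; try exact: sorted_sort.
  by apply/allrelP => x y; rewrite !mem_sort; exact: hlt.
have heq : sort leq t ++ sort leq u = iota 0 (size t) ++ iota (size t) (size u).
  rewrite -iotaD; apply: (irr_sorted_eq ltn_trans ltnn hsorted (iota_ltn_sorted _ _)).
  by move=> x; rewrite -(perm_mem htu) !mem_cat !mem_sort.
move/eqP: heq; rewrite eqseq_cat ?size_sort ?size_iota // => /andP [/eqP <- /eqP <-].
by split; rewrite perm_sym perm_sort.
Qed.

Lemma sum_indecomposable_cat t u : is_perm (t ++ u) -> sum_indecomposable (t ++ u) ->
  allrel ltn t u -> t = [::] \/ u = [::].
Proof.
rewrite /is_perm size_cat => htu hind hlt.
have [ht hu] := perm_iota_cat htu hlt.
set u' := [seq x - size t | x <- u].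
have hu' : is_perm u'.
  rewrite /is_perm size_map.
  have -> : iota 0 (size u) = [seq x - size t | x <- iota (size t) (size u)].
    rewrite -[size t]addn0 iotaDl -map_comp -[LHS]map_id.
    by apply: eq_map => x /=; lia.
  exact: perm_map.
have hdsum : t ++ u = dsum t u'.
  rewrite /dsum -map_comp; congr (_ ++ _); rewrite -[LHS]map_id; apply/eq_in_map => x.
  by rewrite (perm_mem hu) mem_iota /= => /andP [hx _]; rewrite subnKC.
case: (hind t u' ht hu' hdsum) => [|/eqP]; first by left.
by rewrite -size_eq0 size_map size_eq0 => /eqP; right.
Qed.

Lemma order_iso_sum_indecomposable sigma s1 s2 :
  is_perm sigma -> sum_indecomposable sigma ->
  order_iso (s1 ++ s2) sigma -> allrel ltn s1 s2 -> s1 = [::] \/ s2 = [::].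
Proof.
move=> hsig hind hiso hlt; have hsize := proj1 hiso; rewrite size_cat in hsize.
have hsplit := order_iso_allrel_cat hiso hlt.
rewrite -(cat_take_drop (size s1) sigma) in hsig hind.
case: (sum_indecomposable_cat hsig hind hsplit) => /eqP;
  rewrite -size_eq0 ?size_takel ?size_drop -?hsize ?leq_addr // ?addKn size_eq0 => /eqP;
  by [left | right].
Qed.

Lemma sorted_cat_threshold (P Q : pred nat) b (J : seq nat) : sorted ltn J ->
  (forall x, P x -> x < b) -> (forall x, Q x -> b <= x) -> all (predU P Q) J ->
  exists J1 J2, [/\ J = J1 ++ J2, all P J1 & all Q J2].
Proof.
move=> + hP hQ; elim: J => [|x J IH] hs /=; first by exists [::], [::].
have /andP [/allP hxJ {}hs] : all (ltn x) J && sorted ltn J.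
  by rewrite -(path_sortedE ltn_trans).
case/andP=> /orP [hPx | hQx] hJ.
  by have [J1 [J2 [-> h1 h2]]] := IH hs hJ; exists (x :: J1), J2; rewrite /= hPx.
exists [::], (x :: J); split => //=; rewrite hQx /=; apply/allP => y hy.
have /orP [/hP hyb | //] := allP hJ y hy.
by exfalso; have := hQ x hQx; have /= := hxJ y hy; lia.
Qed.

Lemma locate_interval (c : nat -> nat) n x : c 0 = 0 -> x < c n ->
  exists2 i, i < n & c i <= x < c i.+1.
Proof.
move=> c0; elim: n => [|n IH]; first by rewrite c0.
move=> hx; case: (leqP (c n) x) => h; first by exists n; rewrite ?h.
by have [i hi hci] := IH h; exists i; [apply: ltnW | ].
Qed.

Lemma monotone_upto (c : nat -> nat) n : (forall i, i < n -> c i <= c i.+1) ->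
  forall a b, a <= b -> b <= n -> c a <= c b.
Proof.
move=> h a; elim=> [|b IH]; first by rewrite leqn0 => /eqP ->.
rewrite leq_eqVlt => /orP [/eqP -> // | hab] hb.
exact: leq_trans (IH hab (ltnW hb)) (h _ hb).
Qed.

Lemma interval_index_le (c : nat -> nat) n i i' x y :
  (forall j, j < n -> c j <= c j.+1) -> i < n ->
  c i <= x -> y < c i'.+1 -> x <= y -> i <= i'.
Proof.
move=> h hi hx hy hxy; rewrite leqNgt; apply/negP => hlt.
by have := monotone_upto h hlt (ltnW hi); lia.
Qed.

Lemma order_iso_skew1 s p J sigma : is_perm sigma ->
  order_iso (map (nth 0 s) (p :: J)) (skew_sum [:: 0] sigma) ->
  order_iso (map (nth 0 s) J) sigma /\ {in J, forall x, nth 0 s x < nth 0 s p}.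
Proof.
rewrite /skew_sum /= addn0 => hsig hiso; have hJ := order_iso_cons hiso.
split=> // x /(nthP 0) [l hl <-].
case: hiso => /= [[hsz]] /(_ l.+1 0); rewrite /= size_map !ltnS (nth_map 0) // => -> //.
by apply: is_perm_nth_lt; rewrite // -hsz size_map.
Qed.

Section Staircase.

Variables (D : perm_class) (pi : seq nat) (k : nat) (c r : nat -> nat).
Hypothesis pi_perm : is_perm pi.
Hypotheses (c0 : c 0 = 0) (ck : c k = size pi)
  (c_mono : forall i, i < k -> c i <= c i.+1).
Hypotheses (r0 : r 0 = 0) (rk : r k.+1 = size pi)
  (r_mono : forall j, j < k.+1 -> r j <= r j.+1).
Hypothesis cells : forall i j, i < k -> j < k.+1 ->
  (if j == i then D else if j == i.+1 then Inc else Empty_cell)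
    (std (cell pi (c i) (c i.+1) (r j) (r j.+1))).

Definition in_cell a b x := (c a <= x < c a.+1) && (r b <= nth 0 pi x < r b.+1).

Lemma contains_cell a b K tau : subseq K (iota 0 (size pi)) -> all (in_cell a b) K ->
  order_iso (map (nth 0 pi) K) tau ->
  contains (std (cell pi (c a) (c a.+1) (r b) (r b.+1))) tau.
Proof. exact: contains_std_cell. Qed.

Lemma staircase_in_cell x : x < size pi ->
  exists a b, [/\ a < k, b < k.+1, in_cell a b x & (b == a) || (b == a.+1)].
Proof.
move=> hx; have hxc : x < c k by rewrite ck.
have [a ha hca] := locate_interval c0 hxc.
have hval : nth 0 pi x < r k.+1 by rewrite rk is_perm_nth_lt.
have [b hb hrb] := locate_interval r0 hval.
exists a, b; split; rewrite /in_cell ?hca ?hrb //.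
have := cells ha hb; case: eqP => // _; case: eqP => // _ hempty.
have : has (in_cell a b) (iota 0 (size pi)).
  by apply/hasP; exists x; rewrite ?mem_iota // /in_cell hca hrb.
by move: hempty => /(congr1 size); rewrite has_count !size_map size_filter => ->.
Qed.

Lemma southeast_in_diagonal p i rho x : i < k -> rho < k.+1 -> in_cell i rho p ->
  (rho == i) || (rho == i.+1) ->
  subseq [:: p; x] (iota 0 (size pi)) -> nth 0 pi x < nth 0 pi p ->
  in_cell i i x || (i.+1 < k) && in_cell i.+1 i.+1 x.
Proof.
move=> hi hrho hp hrho_diag hpx hxp.
have /andP [hlt _] := subseq_sorted ltn_trans hpx (iota_ltn_sorted 0 (size pi)).
have hx : x < size pi.
  by have := mem_subseq hpx (mem_last p [:: x]); rewrite mem_iota.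
have [a [b [ha hb hxab hab]]] := staircase_in_cell hx.
move: hp hxab; rewrite /in_cell => /andP [/andP [hcp hpc] /andP [hrp hpr]].
move=> /andP [/andP [hcx hxc] /andP [hrx hxr]].
have hia : i <= a := interval_index_le c_mono hi hcp hxc (ltnW hlt).
have hbr : b <= rho := interval_index_le r_mono hb hrx hpr (ltnW hxp).
have [[ea eb] | [[ea eb] | [ea [eb erho]]]] :
    (a = i /\ b = i) \/ (a = i.+1 /\ b = i.+1) \/ a = i /\ b = i.+1 /\ rho = i.+1.
  by move: hab hrho_diag => /orP [] /eqP eb /orP [] /eqP erho; subst b rho; lia.
all: subst a b.
- by rewrite hcx hxc hrx hxr.
- by rewrite ha hcx hxc hrx hxr orbT.
have := cells hi hb; rewrite (gtn_eqF (ltnSn i)) eqxx /Inc /Av.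
move=> hinc; exfalso; apply: hinc.
apply: (@contains_cell i i.+1 [:: p; x]) => //=.
  by subst rho; rewrite /in_cell hcp hpc hrp hpr hcx hxc hrx hxr.
by split=> // -[|[|?]] [|[|?]] //= _ _; rewrite ?ltnn ?hxp // ltnNge ltnW.
Qed.

Lemma southeast_split p J : subseq (p :: J) (iota 0 (size pi)) ->
  {in J, forall x, nth 0 pi x < nth 0 pi p} ->
  exists i J1 J2, [/\ i < k, J = J1 ++ J2, all (in_cell i i) J1
    & all (fun x => (i.+1 < k) && in_cell i.+1 i.+1 x) J2].
Proof.
move=> hsub hbelow.
have hp : p < size pi by have := mem_subseq hsub (mem_head p J); rewrite mem_iota.
have [i [rho [hi hrho hpcell hdiag]]] := staircase_in_cell hp.
have hsorted : sorted ltn J.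
  exact: path_sorted (subseq_sorted ltn_trans hsub (iota_ltn_sorted 0 _)).
have hJ : all (predU (in_cell i i) (fun x => (i.+1 < k) && in_cell i.+1 i.+1 x)) J.
  apply/allP => x hx; apply: (southeast_in_diagonal hi hrho hpcell hdiag _ (hbelow x hx)).
  by apply: subseq_trans hsub; rewrite /= eqxx sub1seq.
have hleft x : in_cell i i x -> x < c i.+1 by case/andP=> /andP [].
have hright x : (i.+1 < k) && in_cell i.+1 i.+1 x -> c i.+1 <= x.
  by case/andP=> _ /andP [/andP []].
have [J1 [J2 [eJ h1 h2]]] := sorted_cat_threshold hsorted hleft hright hJ.
by exists i, J1, J2.
Qed.

Lemma southeast_diagonal_contains sigma p J : is_perm sigma -> sum_indecomposable sigma ->
  subseq (p :: J) (iota 0 (size pi)) -> order_iso (map (nth 0 pi) J) sigma ->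
  {in J, forall x, nth 0 pi x < nth 0 pi p} ->
  exists2 a, a < k & contains (std (cell pi (c a) (c a.+1) (r a) (r a.+1))) sigma.
Proof.
move=> hsig hind hsub hiso hbelow.
have [i [J1 [J2 [hi eJ h1 h2]]]] := southeast_split hsub hbelow.
have hJ : subseq J (iota 0 (size pi)) := subseq_trans (subseq_cons J p) hsub.
have hJ12 : J1 = [::] \/ J2 = [::].
  have hrows : allrel ltn (map (nth 0 pi) J1) (map (nth 0 pi) J2).
    apply/allrelP => _ _ /mapP [x hx ->] /mapP [y hy ->].
    case/andP: (allP h1 x hx) => _ /andP [_ hxr].
    case/and3P: (allP h2 y hy) => _ _ /andP [hry _].
    exact: leq_trans hxr hry.
  rewrite eJ map_cat in hiso.
  have := order_iso_sum_indecomposable hsig hind hiso hrows.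
  by case=> /eqP; rewrite -size_eq0 size_map size_eq0 => /eqP ->; [left | right].
case: J2 hJ12 eJ h2 => [_ eJ _ | y J2 [-> | //] /= eJ /andP [/andP [hik hy] h2]].
  by exists i => //; apply: (contains_cell hJ) hiso; rewrite eJ cats0.
exists i.+1 => //; apply: (contains_cell hJ) hiso; rewrite eJ /= hy.
by apply: sub_all h2 => x /andP [].
Qed.

End Staircase.

Theorem proposition11 (sigma : seq nat) :
  is_perm sigma -> sum_indecomposable sigma ->
  forall pi : seq nat, is_perm pi ->
    St Inc (Av sigma) pi -> Av (skew_sum [:: 0] sigma) pi.
Proof.
move=> hsig hind pi hpi [k [_ [c [r [[c0 ck c_mono] [[r0 rk r_mono] cells]]]]]].
case/contains_indices=> -[|p J] hsub hiso; first by case: hiso.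
have [hJ hbelow] := order_iso_skew1 hsig hiso.
have [a ha] := southeast_diagonal_contains hpi c0 ck c_mono r0 rk r_mono cells
  hsig hind hsub hJ hbelow.
by have := cells a a ha (ltnW ha); rewrite eqxx.
Qed.
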